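(* A connected graph $G$ on $n$ vertices satisfies $\operatorname{cdim}(G)=n-1$ if and only if $G$ is uniformly connected, i.e., there is an integer $k$ such that $\kappa(v,w)=k$ for all pairs of distinct vertices $v,w\in V(G)$.
   Context: All graphs are finite, simple, undirected and nonempty. For distinct vertices $v,w$, $\kappa(v,w)$ is the maximum number of internally vertex-disjoint $v$–$w$ paths (an edge $vw$ counts as one such path); $\kappa(v,v)=\infty$. For an ordered vertex set $W=(w_1,\ldots,w_k)$, $r_G(v,W)=[\kappa(v,w_1),\ldots,\kappa(v,w_k)]$. $W$ is resolving if $r_G(v_1,W)=r_G(v_2,W)$ implies $v_1=v_2$ (the empty set is resolving for the one-vertex graph). The connectivity dimension $\operatorname{cdim}(G)$ is the minimum cardinality of a resolving set. *)

(* Simple graphs as symmetric irreflexive relations on a finType. *)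
From mathcomp Require Import all_boot.
From Stdlib Require Import ClassicalEpsilon.
Set Implicit Arguments. Unset Strict Implicit. Unset Printing Implicit Defensive.

Section Graph.
Variables (T : finType) (e : rel T).

Definition decide (P : Prop) : bool :=
  if excluded_middle_informative P then true else false.

Definition connected_graph : Prop := forall v w : T, connect e v w.

(* p is (the sequence of vertices after v of) a v--w path:
   v :: p is an e-path ending at w with no repeated vertex, and v <> w. *)
Definition is_vw_path (v w : T) (p : seq T) : bool :=
  [&& v != w, path e v p, last v p == w & uniq (v :: p)].

Definition interior (v : T) (p : seq T) : seq T := behead (belast v p).

Definition disjoint_paths (v w : T) (P : seq (seq T)) : bool :=
  all (is_vw_path v w) P &&
  pairwise (fun p q => (p != q) &&
              all (fun x => x \notin interior v q) (interior v p)) P.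

Definition has_k_disjoint_paths (v w : T) (k : nat) : Prop :=
  exists P : seq (seq T), size P = k /\ disjoint_paths v w P.

(* maximum number of internally disjoint v--w paths (for v <> w);
   such a number never exceeds #|T|, so the max over 0..#|T| is the true max. *)
Definition kappa_nat (v w : T) : nat :=
  \max_(k < #|T|.+1 | decide (has_k_disjoint_paths v w k)) (k : nat).

(* kappa v w, with None standing for infinity (kappa v v = oo) *)
Definition kappa (v w : T) : option nat :=
  if v == w then None else Some (kappa_nat v w).

Definition rep (v : T) (W : seq T) : seq (option nat) := [seq kappa v x | x <- W].

Definition resolving (W : seq T) : Prop :=
  uniq W /\ forall v1 v2 : T, rep v1 W = rep v2 W -> v1 = v2.

(* connectivity dimension: the minimum cardinality of a resolving set.
   The default #|T| is attained by enum T, which is always resolving. *)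
Definition cdim : nat :=
  \big[minn/#|T|]_(k < #|T|.+1 |
      decide (exists W : seq T, size W = k /\ resolving W)) (k : nat).

Definition uniformly_connected : Prop :=
  exists k : nat, forall v w : T, v != w -> kappa v w = Some k.

End Graph.

(* Two vertices outside a resolving set W can only be told apart by their
   connectivities to the vertices of W.  If G is uniformly connected, all such
   connectivities agree, so W must contain all vertices but one; conversely the
   complement of any vertex is resolving, hence cdim G = n - 1.  If G is not
   uniformly connected then, kappa being symmetric, some two vertices a, b have
   kappa(a, x) <> kappa(b, x) for a third vertex x, and the complement of
   {a, b} is a resolving set of size n - 2. *)
From mathcomp Require Import all_boot all_order zify.
Import Order.TTheory.
From Stdlib Require Import ClassicalEpsilon.
Set Implicit Arguments. Unset Strict Implicit. Unset Printing Implicit Defensive.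

Lemma decideP (P : Prop) : decide P <-> P.
Proof. by rewrite /decide; case: excluded_middle_informative. Qed.

Section Symmetry.
Variables (T : finType) (e : rel T).
Hypothesis e_sym : symmetric e.

Definition reverse_path (v : T) (p : seq T) : seq T := rcons (rev (interior v p)) v.

Lemma interior_rcons (w : T) s v : interior w (rcons s v) = s.
Proof. by rewrite /interior belast_rcons. Qed.

Lemma is_vw_path_rcons v w p : is_vw_path e v w p -> p = rcons (interior v p) w.
Proof.
case/and4P=> vw _ /eqP lst _; case: p lst => [|y s] lst; first by rewrite -lst eqxx in vw.
by rewrite /interior /= -lst -lastI.
Qed.

Lemma is_vw_path_reverse v w p :
  is_vw_path e v w p -> is_vw_path e w v (reverse_path v p).
Proof.
move=> pvw; have def_p := is_vw_path_rcons pvw.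
case/and4P: pvw => vw pth _ un; rewrite /is_vw_path /reverse_path.
set I := interior v p in def_p *; rewrite def_p in pth un.
have rev_vIw : w :: rcons (rev I) v = rev (v :: rcons I w) by rewrite rev_cons rev_rcons.
rewrite eq_sym vw last_rcons eqxx rev_vIw rev_uniq un /= andbT.
have := rev_path e v (rcons I w); rewrite last_rcons belast_rcons rev_cons => ->.
by rewrite (@eq_path _ _ e) // => x y; rewrite e_sym.
Qed.

Lemma has_k_disjoint_paths_sym v w k :
  has_k_disjoint_paths e v w k -> has_k_disjoint_paths e w v k.
Proof.
case=> P [sizeP /andP [pathsP pairP]].
exists (map (reverse_path v) P); split; first by rewrite size_map.
apply/andP; split.
  by rewrite all_map; apply/allP => p /(allP pathsP) /is_vw_path_reverse.
rewrite pairwise_map; move: pairP; apply: (sub_in_pairwise (P := is_vw_path e v w)) => //.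
move=> p q p_vw q_vw /andP [pq disj]; rewrite /relpre /= /reverse_path !interior_rcons.
apply/andP; split.
  apply: contra pq; rewrite eqseq_rcons eqxx andbT => /eqP /(congr1 rev).
  by rewrite !revK => Ipq; rewrite (is_vw_path_rcons p_vw) (is_vw_path_rcons q_vw) Ipq.
by rewrite all_rev; apply/allP => x x_p; rewrite mem_rev (allP disj).
Qed.

Lemma kappa_nat_sym v w : kappa_nat e v w = kappa_nat e w v.
Proof.
by apply: eq_bigl => k; apply/idP/idP => /decideP/has_k_disjoint_paths_sym/decideP.
Qed.

End Symmetry.

Section OffDiagonal.
Variables (T : eqType) (R : Type) (f : T -> T -> R).
Hypothesis f_sym : forall v w, f v w = f w v.
Hypothesis f_star : forall a b x, a != x -> b != x -> f a x = f b x.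

Lemma offdiag_const a b v w : a != b -> v != w -> f v w = f a b.
Proof.
move=> ab vw; have ba : b != a by rewrite eq_sym.
case: (eqVneq w a) vw => [-> | wa] vw; first by rewrite (f_star vw ba) f_sym.
have aw : a != w by rewrite eq_sym.
by rewrite (f_star vw aw) f_sym (f_star wa ba) f_sym.
Qed.

End OffDiagonal.

Section Dimension.
Variables (T : finType) (e : rel T).

Lemma kappa_neq v w : v != w -> kappa e v w = Some (kappa_nat e v w).
Proof. by rewrite /kappa => /negbTE ->. Qed.

(* kappa v v = oo is the only infinite coordinate: a vertex of W is recognised
   by its own representation. *)
Lemma rep_inj_mem v1 v2 W : rep e v1 W = rep e v2 W -> v1 \in W -> v1 = v2.
Proof.
move=> /eq_in_map rep12 v1W; have := rep12 v1 v1W.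
by rewrite /kappa eqxx; case: eqP.
Qed.

Lemma resolving_enumC (A : {set T}) :
  (forall v1 v2, v1 \in A -> v2 \in A ->
     rep e v1 (enum (~: A)) = rep e v2 (enum (~: A)) -> v1 = v2) ->
  resolving e (enum (~: A)).
Proof.
move=> injA; split=> [|v1 v2 rep12]; first exact: enum_uniq.
have [v1W | v1A] := boolP (v1 \in enum (~: A)); first exact: rep_inj_mem rep12 v1W.
have [v2W | v2A] := boolP (v2 \in enum (~: A)); first exact: esym (rep_inj_mem (esym rep12) v2W).
by apply: injA; move: v1A v2A; rewrite !mem_enum !inE !negbK.
Qed.

Lemma size_enumC (A : {set T}) : size (enum (~: A)) = #|T| - #|A|.
Proof. by rewrite -cardE cardsCs setCK. Qed.

Lemma cdim_le W : resolving e W -> size W <= #|T| -> cdim e <= size W.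
Proof.
move=> resW le_WT; rewrite /cdim -minEnat.
apply: (@bigmin_le_cond _ nat _ _ (Ordinal (le_WT : size W < #|T|.+1)) _ (@nat_of_ord _)).
by apply/decideP; exists W.
Qed.

Lemma cdim_ge m : m <= #|T| -> (forall W, resolving e W -> m <= size W) -> m <= cdim e.
Proof.
move=> le_mT minW; rewrite /cdim -minEnat; apply: (@le_bigmin _ nat) => // k.
by move=> /decideP [W [<- resW]]; exact: minW.
Qed.

Lemma cdim_le_pred_card : 0 < #|T| -> cdim e <= #|T| - 1.
Proof.
case/card_gt0P=> u _; rewrite -(cards1 u) -size_enumC.
apply: cdim_le; last by rewrite size_enumC leq_subr.
by apply: resolving_enumC => v1 v2; rewrite !inE => /eqP -> /eqP ->.
Qed.

Lemma cdim_lt_pred_card a b x : a != b -> a != x -> b != x ->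
  kappa_nat e a x != kappa_nat e b x -> cdim e < #|T| - 1.
Proof.
move=> ab ax bx kab; set W := enum (~: [set a; b]).
have sizeW : size W = #|T| - 2 by rewrite size_enumC cards2 ab.
have card_gt1 : 1 < #|T| by have := max_card (mem [set a; b]); rewrite cards2 ab.
have xW : x \in W by rewrite mem_enum !inE negb_or ![x == _]eq_sym ax bx.
have resW : resolving e W.
  apply: resolving_enumC => v1 v2; rewrite !inE.
  move=> /orP [] /eqP -> /orP [] /eqP -> // /eq_in_map /(_ x xW);
    by rewrite !kappa_neq // => -[kx]; rewrite kx eqxx in kab.
have := cdim_le resW; rewrite sizeW leq_subr => /(_ isT); lia.
Qed.

Lemma uniform_resolving_size W : uniformly_connected e -> resolving e W ->
  #|T| - 1 <= size W.
Proof.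
case=> k unif [uW resW]; rewrite leqNgt; apply/negP => small.
have : 1 < #|~: [set x in W]|.
  by move: small; rewrite cardsCs setCK cardsE (card_uniqP uW); lia.
case/card_gt1P=> u1 [u2 [u1W u2W u12]]; move: u1W u2W; rewrite !inE => u1W u2W.
move/eqP: u12; apply; apply: resW; apply/eq_in_map => x xW.
have neq_x u : u \notin W -> u != x by apply: contraNneq => ->.
by rewrite !unif // neq_x.
Qed.

End Dimension.

Theorem mainTheorem3 (T : finType) (e : rel T)
  (e_sym : symmetric e) (e_irr : irreflexive e)
  (nonempty : 0 < #|T|) (conn : connected_graph e) :
  cdim e = #|T| - 1 <-> uniformly_connected e.
Proof.
split=> [cdimE | unif].
- have star a b x : a != x -> b != x -> kappa_nat e a x = kappa_nat e b x.
    move=> ax bx; have [-> // | ab] := eqVneq a b.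
    apply/eqP/negPn/negP => /(cdim_lt_pred_card ab ax bx).
    by rewrite cdimE ltnn.
  have [/card_gt1P [a [b [_ _ ab]]] | card_le1] := ltnP 1 #|T|.
    exists (kappa_nat e a b) => v w vw; rewrite kappa_neq //.
    by rewrite (offdiag_const (kappa_nat_sym e_sym) star ab vw).
  exists 0 => v w vw; move: card_le1.
  by rewrite leqNgt; case/negP; apply/card_gt1P; exists v, w.
- apply/eqP; rewrite eqn_leq cdim_le_pred_card //=.
  by apply: cdim_ge; [exact: leq_subr | move=> W; exact: uniform_resolving_size].
Qed.
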